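(* The free semigroup $\{a,b\}^+$ on two generators is neither left fairly amenable nor right fairly amenable.
   Context: For a semigroup $U$, $s\in U$, $A\subseteq U$: $s$ acts injectively on the left (right) of $A$ if $x\mapsto sx$ ($x\mapsto xs$) is injective on $A$. A finitely-additive probability measure on $U$ is $\mu:\mathcal P(U)\to[0,1]$ with $\mu(U)=1$, additive on disjoint sets; it is left fairly invariant if $\mu(sA)=\mu(A)$ whenever $s$ acts injectively on the left of $A$ (right fairly invariant analogously with $As$). $U$ is left (right) fairly amenable if such a measure exists. *)

From Stdlib Require Import Reals List.
Import ListNotations.
Open Scope R_scope.

(* A finitely-additive probability measure on P(U). Since sets are
   represented as predicates, we also require mu to respect extensional
   equality of sets (as a genuine function on P(U) does). *)
Definition fa_prob_measure {U : Type} (mu : (U -> Prop) -> R) : Prop :=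
  (forall A, 0 <= mu A <= 1) /\
  (forall A B, (forall x, A x <-> B x) -> mu A = mu B) /\
  mu (fun _ => True) = 1 /\
  (forall A B, (forall x, ~ (A x /\ B x)) ->
     mu (fun x => A x \/ B x) = mu A + mu B).

Definition inj_left {U : Type} (op : U -> U -> U) (s : U) (A : U -> Prop) : Prop :=
  forall x y, A x -> A y -> op s x = op s y -> x = y.
Definition inj_right {U : Type} (op : U -> U -> U) (s : U) (A : U -> Prop) : Prop :=
  forall x y, A x -> A y -> op x s = op y s -> x = y.

Definition lmul_set {U : Type} (op : U -> U -> U) (s : U) (A : U -> Prop) : U -> Prop :=
  fun y => exists x, A x /\ y = op s x.
Definition rmul_set {U : Type} (op : U -> U -> U) (s : U) (A : U -> Prop) : U -> Prop :=
  fun y => exists x, A x /\ y = op x s.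

Definition left_fairly_invariant {U : Type} (op : U -> U -> U) (mu : (U -> Prop) -> R) : Prop :=
  forall s A, inj_left op s A -> mu (lmul_set op s A) = mu A.
Definition right_fairly_invariant {U : Type} (op : U -> U -> U) (mu : (U -> Prop) -> R) : Prop :=
  forall s A, inj_right op s A -> mu (rmul_set op s A) = mu A.

Definition left_fairly_amenable {U : Type} (op : U -> U -> U) : Prop :=
  exists mu, fa_prob_measure mu /\ left_fairly_invariant op mu.
Definition right_fairly_amenable {U : Type} (op : U -> U -> U) : Prop :=
  exists mu, fa_prob_measure mu /\ right_fairly_invariant op mu.

(* The free semigroup {a,b}^+ : nonempty words over the alphabet bool
   (a = true, b = false), a word being (first letter, remaining letters). *)
Definition FS2 : Type := (bool * list bool)%type.
Definition fs2_mul (x y : FS2) : FS2 := (fst x, snd x ++ fst y :: snd y).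

From Stdlib Require Import Reals List Lra.
Import ListNotations.

(* A finitely additive probability measure cannot give full
   measure to two disjoint sets, since their union would have measure 2.
   If two elements s, t of a semigroup U act injectively on all of U and
   the translates sU and tU are disjoint, a left fairly invariant measure
   would give mu(sU) = mu(U) = 1 = mu(tU), which is impossible; the same
   holds on the right with Us and Ut.  In the free semigroup {a,b}^+ every
   element acts injectively on both sides (cancellativity), and the
   translates by the one-letter words a and b are disjoint: aU consists of
   the words beginning with a, bU of those beginning with b, and likewise
   Ua, Ub are the words ending with a, resp. b. *)

Definition full_set {U : Type} : U -> Prop := fun _ => True.

Definition disjoint_sets {U : Type} (A B : U -> Prop) : Prop :=
  forall x, ~ (A x /\ B x).

Lemma fa_prob_measure_no_two_disjoint_full {U : Type}
    (mu : (U -> Prop) -> R) (A B : U -> Prop) :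
  fa_prob_measure mu -> disjoint_sets A B -> mu A = 1 -> mu B = 1 -> False.
Proof.
  intros [bounded [_ [_ additive]]] disjAB muA muB.
  pose proof (additive A B disjAB) as muAB.
  destruct (bounded (fun x => A x \/ B x)).
  lra.
Qed.

Lemma not_left_fairly_amenable_of_disjoint_translates {U : Type}
    (op : U -> U -> U) (s t : U) :
  inj_left op s full_set -> inj_left op t full_set ->
  disjoint_sets (lmul_set op s full_set) (lmul_set op t full_set) ->
  ~ left_fairly_amenable op.
Proof.
  intros inj_s inj_t disj [mu [mu_prob invariant]].
  assert (muU : mu full_set = 1) by apply mu_prob.
  apply (fa_prob_measure_no_two_disjoint_full mu _ _ mu_prob disj).
  - rewrite (invariant s full_set inj_s); exact muU.
  - rewrite (invariant t full_set inj_t); exact muU.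
Qed.

Lemma not_right_fairly_amenable_of_disjoint_translates {U : Type}
    (op : U -> U -> U) (s t : U) :
  inj_right op s full_set -> inj_right op t full_set ->
  disjoint_sets (rmul_set op s full_set) (rmul_set op t full_set) ->
  ~ right_fairly_amenable op.
Proof.
  intros inj_s inj_t disj [mu [mu_prob invariant]].
  assert (muU : mu full_set = 1) by apply mu_prob.
  apply (fa_prob_measure_no_two_disjoint_full mu _ _ mu_prob disj).
  - rewrite (invariant s full_set inj_s); exact muU.
  - rewrite (invariant t full_set inj_t); exact muU.
Qed.

Definition letter (c : bool) : FS2 := (c, []).

Lemma fs2_left_cancel (s : FS2) (A : FS2 -> Prop) : inj_left fs2_mul s A.
Proof.
  intros [x1 x2] [y1 y2] _ _ eq_sx_sy; unfold fs2_mul in eq_sx_sy; simpl in eq_sx_sy.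
  injection eq_sx_sy as eq_tails.
  apply app_inv_head in eq_tails; injection eq_tails as -> ->; reflexivity.
Qed.

Lemma fs2_right_cancel (s : FS2) (A : FS2 -> Prop) : inj_right fs2_mul s A.
Proof.
  intros [x1 x2] [y1 y2] _ _ eq_xs_ys; unfold fs2_mul in eq_xs_ys; simpl in eq_xs_ys.
  injection eq_xs_ys as -> eq_tails.
  apply app_inv_tail in eq_tails; subst; reflexivity.
Qed.

Lemma fs2_left_translates_disjoint :
  disjoint_sets (lmul_set fs2_mul (letter true) full_set)
                (lmul_set fs2_mul (letter false) full_set).
Proof.
  intros w [[x [_ ->]] [y [_ eq_w]]]; discriminate eq_w.
Qed.

Lemma fs2_right_translates_disjoint :
  disjoint_sets (rmul_set fs2_mul (letter true) full_set)
                (rmul_set fs2_mul (letter false) full_set).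
Proof.
  intros w [[x [_ ->]] [y [_ eq_w]]].
  unfold fs2_mul in eq_w; simpl in eq_w; injection eq_w as _ eq_tails.
  apply app_inj_tail in eq_tails as [_ eq_last]; discriminate eq_last.
Qed.

Theorem mainTheorem19 :
  ~ left_fairly_amenable fs2_mul /\ ~ right_fairly_amenable fs2_mul.
Proof.
  split.
  - apply (not_left_fairly_amenable_of_disjoint_translates _ (letter true) (letter false));
      [apply fs2_left_cancel | apply fs2_left_cancel | apply fs2_left_translates_disjoint].
  - apply (not_right_fairly_amenable_of_disjoint_translates _ (letter true) (letter false));
      [apply fs2_right_cancel | apply fs2_right_cancel | apply fs2_right_translates_disjoint].
Qed.
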